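(* For every term $t\in T( *,\circ,x)$ and every word $w\in\mathcal{W}$ such that $t\cdot\mathit{eval}(w)$ is defined, the equality $\mathtt{Cc}(t\cdot\mathit{eval}(w))=\mathtt{Cc}(t)\cdot\mathrm{sh}_0(\mathtt{eval}(w))$ holds in the group $G_{\mathtt{ALD}}$. (That is, $\mathtt{Cc}$ is an $\mathrm{sh}_0$-blueprint for the $\mathtt{ALD}$-laws.)
   Context: $T( *,\circ,x)$: terms in the single variable $x$ with binary symbols $*,\circ$. Addresses: finite sequences over $\{0,1\}$, $\varepsilon$ empty, concatenation written by juxtaposition; $t/\alpha$ the subterm at $\alpha$. Two addresses are incomparable if neither is a prefix of the other. Partial operators on terms (acting on the right): $S^{+}_{\alpha}$ is defined on $t$ iff $t/\alpha=t_1*(t_2\square t_3)$ with $\square\in\{*,\circ\}$ and replaces it by $(t_1*t_2)\square(t_1*t_3)$; $A^{+}_{\alpha}$ is defined iff $t/\alpha=t_1*(t_2*t_3)$ and replaces it by $(t_1\circ t_2)*t_3$; $S^-_\alpha,A^-_\alpha$ are the inverse partial maps. $\mathcal{W}$ is the free monoid on the letters $S^{\pm}_\alpha,A^{\pm}_\alpha$; $\mathit{eval}(w)$ is the partial map obtained by applying the letters of $w$ from left to right. $G_{\mathtt{ALD}}$ is the group generated by elements $S_\alpha,A_\alpha$ ($\alpha\in\{0,1\}^*$) subject to the following relations, where $X,Y$ each stand for $S$ or $A$ and $\alpha,\beta,\delta$ are arbitrary addresses ($\delta$ possibly empty): $X_\alpha Y_\beta=Y_\beta X_\alpha$ for $\alpha,\beta$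 incomparable; $X_{\alpha0\delta}S_\alpha=S_\alpha X_{\alpha00\delta}X_{\alpha10\delta}$; $X_{\alpha10\delta}S_\alpha=S_\alpha X_{\alpha01\delta}$; $X_{\alpha11\delta}S_\alpha=S_\alpha X_{\alpha11\delta}$; $X_{\alpha0\delta}A_\alpha=A_\alpha X_{\alpha00\delta}$; $X_{\alpha10\delta}A_\alpha=A_\alpha X_{\alpha01\delta}$; $X_{\alpha11\delta}A_\alpha=A_\alpha X_{\alpha1\delta}$; $S_\alpha S_{\alpha1}S_\alpha=S_{\alpha1}S_\alpha S_{\alpha1}S_{\alpha0}$; $S_\alpha S_{\alpha1}A_\alpha=A_{\alpha1}S_\alpha S_{\alpha0}$; $A_\alpha S_\alpha=S_{\alpha1}S_\alpha A_{\alpha1}A_{\alpha0}$. $\mathtt{eval}:\mathcal{W}\to G_{\mathtt{ALD}}$ is the monoid homomorphism with $S^{+}_\alpha\mapsto S_\alpha$, $S^-_\alpha\mapsto S_\alpha^{-1}$, $A^+_\alpha\mapsto A_\alpha$, $A^-_\alpha\mapsto A_\alpha^{-1}$. For an address $\beta$, $\mathrm{sh}_\beta$ is the endomorphism of $G_{\mathtt{ALD}}$ with $S_\alpha\mapsto S_{\beta\alpha}$, $A_\alpha\mapsto A_{\beta\alpha}$. $\mathtt{Cc}:T( *,\circ,x)\to G_{\mathtt{ALD}}$ is defined by $\mathtt{Cc}(x)=1$, $\mathtt{Cc}(t_1*t_2)=\mathtt{Cc}(t_1)\,\mathrm{sh}_1(\mathtt{Cc}(t_2))\,S_\varepsilon\,\mathrm{sh}_1(\mathtt{Cc}(t_1))^{-1}$,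 $\mathtt{Cc}(t_1\circ t_2)=\mathtt{Cc}(t_1)\,\mathrm{sh}_1(\mathtt{Cc}(t_2))\,A_\varepsilon$. *)

From Stdlib Require Import List Bool.
Import ListNotations.

Inductive term : Type :=
| Var : term
| Star : term -> term -> term
| Circ : term -> term -> term.

Definition term_eq_dec (t u : term) : {t = u} + {t <> u}.
Proof. decide equality. Defined.

(** Addresses: finite sequences over {0,1}; false = 0 (left), true = 1 (right). *)
Definition address := list bool.

Fixpoint at_addr (f : term -> option term) (a : address) (t : term) : option term :=
  match a with
  | nil => f t
  | b :: a' =>
    match t with
    | Var => None
    | Star t1 t2 =>
        if b then option_map (Star t1) (at_addr f a' t2)
        else option_map (fun u => Star u t2) (at_addr f a' t1)
    | Circ t1 t2 =>
        if b then option_map (Circ t1) (at_addr f a' t2)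
        else option_map (fun u => Circ u t2) (at_addr f a' t1)
    end
  end.

Definition Splus_root (t : term) : option term :=
  match t with
  | Star t1 (Star t2 t3) => Some (Star (Star t1 t2) (Star t1 t3))
  | Star t1 (Circ t2 t3) => Some (Circ (Star t1 t2) (Star t1 t3))
  | _ => None
  end.

Definition Sminus_root (t : term) : option term :=
  match t with
  | Star (Star t1 t2) (Star t1' t3) =>
      if term_eq_dec t1 t1' then Some (Star t1 (Star t2 t3)) else None
  | Circ (Star t1 t2) (Star t1' t3) =>
      if term_eq_dec t1 t1' then Some (Star t1 (Circ t2 t3)) else None
  | _ => None
  end.

Definition Aplus_root (t : term) : option term :=
  match t with
  | Star t1 (Star t2 t3) => Some (Star (Circ t1 t2) t3)
  | _ => None
  end.

Definition Aminus_root (t : term) : option term :=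
  match t with
  | Star (Circ t1 t2) t3 => Some (Star t1 (Star t2 t3))
  | _ => None
  end.

(** Letters of the free monoid W: S^{+-}_a, A^{+-}_a.
    The boolean is the sign: true = +, false = -. *)
Inductive letter : Type :=
| LS : bool -> address -> letter
| LA : bool -> address -> letter.

Definition word := list letter.

Definition eval_letter (l : letter) : term -> option term :=
  match l with
  | LS true a => at_addr Splus_root a
  | LS false a => at_addr Sminus_root a
  | LA true a => at_addr Aplus_root a
  | LA false a => at_addr Aminus_root a
  end.

Fixpoint eval (w : word) (t : term) : option term :=
  match w with
  | nil => Some t
  | l :: w' =>
    match eval_letter l t with
    | Some t' => eval w' t'
    | None => None
    end
  end.

(** The group G_ALD, presented by generators S_a, A_a and relations.
    Elements are represented by group words (lists of generators with an
    inversion flag); equality in G_ALD is the congruence [geq] generated by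
    free cancellation and the defining relations. *)
Inductive kind : Type := KS | KA.
Definition gen : Type := (kind * address)%type.
(* (g, false) = g ; (g, true) = g^{-1} *)
Definition gword := list (gen * bool).

Definition g (k : kind) (a : address) : gword := [((k, a), false)].

Definition ginv (u : gword) : gword :=
  rev (map (fun p => (fst p, negb (snd p))) u).

Fixpoint is_prefix (a b : address) : bool :=
  match a, b with
  | nil, _ => true
  | x :: a', y :: b' => Bool.eqb x y && is_prefix a' b'
  | _ :: _, nil => false
  end.

Definition incomparable (a b : address) : Prop :=
  is_prefix a b = false /\ is_prefix b a = false.

Definition c0 (a d : address) := a ++ false :: d.
Definition c1 (a d : address) := a ++ true :: d.
Definition c00 (a d : address) := a ++ false :: false :: d.
Definition c01 (a d : address) := a ++ false :: true :: d.
Definition c10 (a d : address) := a ++ true :: false :: d.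
Definition c11 (a d : address) := a ++ true :: true :: d.

Inductive ald_rel : gword -> gword -> Prop :=
| rel_comm X Y a b : incomparable a b ->
    ald_rel (g X a ++ g Y b) (g Y b ++ g X a)
| rel_S0 X a d :
    ald_rel (g X (c0 a d) ++ g KS a) (g KS a ++ g X (c00 a d) ++ g X (c10 a d))
| rel_S10 X a d :
    ald_rel (g X (c10 a d) ++ g KS a) (g KS a ++ g X (c01 a d))
| rel_S11 X a d :
    ald_rel (g X (c11 a d) ++ g KS a) (g KS a ++ g X (c11 a d))
| rel_A0 X a d :
    ald_rel (g X (c0 a d) ++ g KA a) (g KA a ++ g X (c00 a d))
| rel_A10 X a d :
    ald_rel (g X (c10 a d) ++ g KA a) (g KA a ++ g X (c01 a d))
| rel_A11 X a d :
    ald_rel (g X (c11 a d) ++ g KA a) (g KA a ++ g X (c1 a d))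
| rel_SSS a :
    ald_rel (g KS a ++ g KS (a ++ [true]) ++ g KS a)
            (g KS (a ++ [true]) ++ g KS a ++ g KS (a ++ [true]) ++ g KS (a ++ [false]))
| rel_SSA a :
    ald_rel (g KS a ++ g KS (a ++ [true]) ++ g KA a)
            (g KA (a ++ [true]) ++ g KS a ++ g KS (a ++ [false]))
| rel_AS a :
    ald_rel (g KA a ++ g KS a)
            (g KS (a ++ [true]) ++ g KS a ++ g KA (a ++ [true]) ++ g KA (a ++ [false])).

Inductive geq : gword -> gword -> Prop :=
| geq_refl u : geq u u
| geq_sym u v : geq u v -> geq v u
| geq_trans u v w : geq u v -> geq v w -> geq u w
| geq_cat u u' v v' : geq u u' -> geq v v' -> geq (u ++ v) (u' ++ v')
| geq_cancel x e : geq [(x, e); (x, negb e)] []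
| geq_rel u v : ald_rel u v -> geq u v.

Definition sh (beta : address) (u : gword) : gword :=
  map (fun p => ((fst (fst p), beta ++ snd (fst p)), snd p)) u.

Definition evalG_letter (l : letter) : gen * bool :=
  match l with
  | LS s a => ((KS, a), negb s)
  | LA s a => ((KA, a), negb s)
  end.

Definition evalG (w : word) : gword := map evalG_letter w.

Fixpoint Cc (t : term) : gword :=
  match t with
  | Var => nil
  | Star t1 t2 => Cc t1 ++ sh [true] (Cc t2) ++ g KS nil ++ ginv (sh [true] (Cc t1))
  | Circ t1 t2 => Cc t1 ++ sh [true] (Cc t2) ++ g KA nil
  end.

From Stdlib Require Import List Bool Setoid Morphisms.
Import ListNotations.

(* By induction on w it suffices to treat a single letter, and since S^-_α and
   A^-_α undo S^+_α and A^+_α, only the positive letters X_α^+.  At the root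
   this is a computation in G_ALD: a word shifted by 1 commutes with every
   X_{0δ}, a word shifted by 11 commutes with S_ε and is turned into a word
   shifted by 1 when moved across A_ε; this brings the Cc's of the three
   subterms out of the way, after which the relations S S_1 S, S S_1 A and A S
   finish the job.  Below the root, the relations X_{0δ} S = S X_{00δ} X_{10δ},
   X_{10δ} S = S X_{01δ} and their A-analogues carry the generator produced
   inside a subterm across the root generator of Cc. *)

#[local] Instance geq_equivalence : Equivalence geq.
Proof. split; [exact geq_refl | exact geq_sym | exact geq_trans]. Qed.

#[local] Instance app_geq_proper : Proper (geq ==> geq ==> geq) (@app (gen * bool)).
Proof. intros u u' Hu v v' Hv. exact (geq_cat _ _ _ _ Hu Hv). Qed.

Lemma ginv_app u v : ginv (u ++ v) = ginv v ++ ginv u.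
Proof. unfold ginv. rewrite map_app, rev_app_distr. reflexivity. Qed.

Lemma ginv_involutive u : ginv (ginv u) = u.
Proof.
  unfold ginv. rewrite map_rev, rev_involutive, map_map.
  induction u as [|[x e] u IH]; cbn; [reflexivity|].
  rewrite negb_involutive. f_equal. exact IH.
Qed.

Lemma app_ginv_r u : geq (u ++ ginv u) [].
Proof.
  induction u as [|[x e] u IH]; [reflexivity|].
  change (geq ([(x, e)] ++ u ++ ginv u ++ [(x, negb e)]) []).
  rewrite (app_assoc u), IH. apply geq_cancel.
Qed.

Lemma app_ginv_l u : geq (ginv u ++ u) [].
Proof. rewrite <- (ginv_involutive u) at 2. apply app_ginv_r. Qed.

Lemma cancel_ginv_r u r : geq (u ++ ginv u ++ r) r.
Proof. rewrite app_assoc, app_ginv_r. reflexivity. Qed.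

Lemma cancel_ginv_l u r : geq (ginv u ++ u ++ r) r.
Proof. rewrite app_assoc, app_ginv_l. reflexivity. Qed.

#[local] Instance ginv_geq_proper : Proper (geq ==> geq) ginv.
Proof.
  intros u v H.
  rewrite <- (app_nil_r (ginv u)), <- (app_ginv_r v), <- H at 1.
  apply cancel_ginv_l.
Qed.

Lemma geq_move_r u v z : geq u (v ++ z) -> geq v (u ++ ginv z).
Proof. intro H. rewrite H, <- app_assoc, app_ginv_r, app_nil_r. reflexivity. Qed.

Lemma sh_app b u v : sh b (u ++ v) = sh b u ++ sh b v.
Proof. apply map_app. Qed.

Lemma sh_ginv b u : sh b (ginv u) = ginv (sh b u).
Proof. unfold sh, ginv. rewrite map_rev, !map_map. reflexivity. Qed.

Lemma sh_g b k a : sh b (g k a) = g k (b ++ a).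
Proof. reflexivity. Qed.

Lemma is_prefix_app b a c : is_prefix (b ++ a) (b ++ c) = is_prefix a c.
Proof. induction b as [|x b IH]; cbn; [reflexivity|]. rewrite eqb_reflx. exact IH. Qed.

Lemma ald_rel_sh b u v : ald_rel u v -> ald_rel (sh b u) (sh b v).
Proof.
  destruct 1 as [X Y a a' [Hab Hba] | | | | | | | | |];
    rewrite ?sh_app, ?sh_g; unfold c0, c1, c00, c01, c10, c11; rewrite ?(app_assoc b).
  - apply rel_comm. split; rewrite is_prefix_app; assumption.
  - apply rel_S0.
  - apply rel_S10.
  - apply rel_S11.
  - apply rel_A0.
  - apply rel_A10.
  - apply rel_A11.
  - apply rel_SSS.
  - apply rel_SSA.
  - apply rel_AS.
Qed.

#[local] Instance sh_geq_proper b : Proper (geq ==> geq) (sh b).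
Proof.
  intros u v H; induction H.
  - reflexivity.
  - symmetry; assumption.
  - etransitivity; eassumption.
  - rewrite !sh_app. apply geq_cat; assumption.
  - apply geq_cancel.
  - apply geq_rel, ald_rel_sh; assumption.
Qed.

Lemma intertwine_ginv u z v : geq (u ++ z) (z ++ v) -> geq (ginv u ++ z) (z ++ ginv v).
Proof.
  intro H. transitivity (ginv u ++ (z ++ v) ++ ginv v).
  - rewrite <- (app_assoc z), app_ginv_r, app_nil_r. reflexivity.
  - rewrite <- H, <- (app_assoc u). apply cancel_ginv_l.
Qed.

Definition map_gen (f : gen -> gen) (u : gword) : gword :=
  map (fun p => (f (fst p), snd p)) u.

Lemma map_gen_intertwine (f f' : gen -> gen) z :
  (forall x, geq ([(f x, false)] ++ z) (z ++ [(f' x, false)])) ->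
  forall u, geq (map_gen f u ++ z) (z ++ map_gen f' u).
Proof.
  intros Hgen u; induction u as [|[x e] u IH]; cbn.
  - rewrite app_nil_r. reflexivity.
  - change (geq ([(f x, e)] ++ map_gen f u ++ z) (z ++ [(f' x, e)] ++ map_gen f' u)).
    rewrite IH, !app_assoc. apply geq_cat; [|reflexivity].
    destruct e; [exact (intertwine_ginv _ _ _ (Hgen x)) | apply Hgen].
Qed.

Definition sh_gen (b : address) (x : gen) : gen := (fst x, b ++ snd x).

Lemma sh_map_gen b u : sh b u = map_gen (sh_gen b) u.
Proof. reflexivity. Qed.

Lemma sh_sh a b u : sh a (sh b u) = sh (a ++ b) u.
Proof.
  unfold sh. rewrite map_map. apply map_ext.
  intros [[k c] e]. cbn. rewrite app_assoc. reflexivity.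
Qed.

Lemma sh1_comm_g0 k d u :
  geq (sh [true] u ++ g k (false :: d)) (g k (false :: d) ++ sh [true] u).
Proof.
  rewrite sh_map_gen. apply map_gen_intertwine.
  intros x. apply geq_rel, rel_comm. split; reflexivity.
Qed.

Lemma sh11_comm_S u :
  geq (sh [true] (sh [true] u) ++ g KS []) (g KS [] ++ sh [true] (sh [true] u)).
Proof.
  rewrite sh_sh, sh_map_gen. apply map_gen_intertwine.
  intros [k a]. exact (geq_rel _ _ (rel_S11 k [] a)).
Qed.

Lemma sh11_A u :
  geq (sh [true] (sh [true] u) ++ g KA []) (g KA [] ++ sh [true] u).
Proof.
  rewrite sh_sh, !sh_map_gen. apply map_gen_intertwine.
  intros [k a]. exact (geq_rel _ _ (rel_A11 k [] a)).
Qed.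

Lemma ginv_sh11_comm_S u :
  geq (ginv (sh [true] (sh [true] u)) ++ g KS []) (g KS [] ++ ginv (sh [true] (sh [true] u))).
Proof. exact (intertwine_ginv _ _ _ (sh11_comm_S u)). Qed.

Lemma ginv_sh11_A u :
  geq (ginv (sh [true] (sh [true] u)) ++ g KA []) (g KA [] ++ ginv (sh [true] u)).
Proof. exact (intertwine_ginv _ _ _ (sh11_A u)). Qed.

Lemma g10_S k d : geq (g k (true :: false :: d) ++ g KS []) (g KS [] ++ g k (false :: true :: d)).
Proof. exact (geq_rel _ _ (rel_S10 k [] d)). Qed.

Lemma g10_A k d : geq (g k (true :: false :: d) ++ g KA []) (g KA [] ++ g k (false :: true :: d)).
Proof. exact (geq_rel _ _ (rel_A10 k [] d)). Qed.

Lemma g0_A k d : geq (g k (false :: d) ++ g KA []) (g KA [] ++ g k (false :: false :: d)).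
Proof. exact (geq_rel _ _ (rel_A0 k [] d)). Qed.

Lemma g0_comm_g1 k : geq (g k [false] ++ g k [true]) (g k [true] ++ g k [false]).
Proof. apply geq_rel, rel_comm. split; reflexivity. Qed.

(* Words are kept right-associated (see [gword_norm]), so relations are used
   followed by an arbitrary tail [r]. *)
Lemma geq_in_context {x y z w} :
  geq (x ++ y) (z ++ w) -> forall r, geq (x ++ y ++ r) (z ++ w ++ r).
Proof. intros H r. rewrite !app_assoc, H. reflexivity. Qed.

Lemma ald_rel_in_context u v r : ald_rel u v -> geq (u ++ r) (v ++ r).
Proof. intro H. apply geq_cat; [apply geq_rel, H | reflexivity]. Qed.

Lemma g0_S k d r :
  geq (g k (false :: d) ++ g KS [] ++ r)
      (g KS [] ++ g k (false :: false :: d) ++ g k (true :: false :: d) ++ r).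
Proof.
  rewrite !app_assoc. apply ald_rel_in_context. rewrite <- !app_assoc. apply (rel_S0 k [] d).
Qed.

Lemma S_S1_S r :
  geq (g KS [] ++ g KS [true] ++ g KS [] ++ r)
      (g KS [true] ++ g KS [] ++ g KS [true] ++ g KS [false] ++ r).
Proof. rewrite !app_assoc. apply ald_rel_in_context. rewrite <- !app_assoc. apply (rel_SSS []). Qed.

Lemma S_S1_A r :
  geq (g KS [] ++ g KS [true] ++ g KA [] ++ r) (g KA [true] ++ g KS [] ++ g KS [false] ++ r).
Proof. rewrite !app_assoc. apply ald_rel_in_context. rewrite <- !app_assoc. apply (rel_SSA []). Qed.

Lemma A_S r :
  geq (g KA [] ++ g KS [] ++ r)
      (g KS [true] ++ g KS [] ++ g KA [true] ++ g KA [false] ++ r).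
Proof. rewrite !app_assoc. apply ald_rel_in_context. rewrite <- !app_assoc. apply (rel_AS []). Qed.

Ltac gword_norm :=
  repeat rewrite ?sh_app, ?ginv_app, ?sh_ginv, ?ginv_involutive, ?sh_g;
  cbn [app]; rewrite <- ?app_assoc.

Lemma Cc_Splus_Star t1 t2 t3 :
  geq (Cc (Star (Star t1 t2) (Star t1 t3))) (Cc (Star t1 (Star t2 t3)) ++ g KS [false]).
Proof.
  cbn [Cc]. gword_norm.
  do 2 f_equiv. rewrite cancel_ginv_l.
  rewrite <- (geq_in_context (sh11_comm_S (Cc t3))). f_equiv.
  rewrite (geq_in_context (ginv_sh11_comm_S (Cc t1))), cancel_ginv_l, S_S1_S. f_equiv.
  rewrite (geq_in_context (ginv_sh11_comm_S (Cc t2))). f_equiv.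
  rewrite <- (geq_in_context (g0_comm_g1 KS)), cancel_ginv_r.
  rewrite <- !sh_ginv, <- (geq_in_context (sh1_comm_g0 KS [] _)). f_equiv.
  symmetry. apply sh1_comm_g0.
Qed.

Lemma Cc_Splus_Circ t1 t2 t3 :
  geq (Cc (Circ (Star t1 t2) (Star t1 t3))) (Cc (Star t1 (Circ t2 t3)) ++ g KS [false]).
Proof.
  cbn [Cc]. gword_norm.
  do 2 f_equiv. rewrite cancel_ginv_l.
  rewrite <- (geq_in_context (sh11_comm_S (Cc t3))). f_equiv.
  rewrite ginv_sh11_A, S_S1_A. do 2 f_equiv.
  rewrite <- sh_ginv. symmetry. apply sh1_comm_g0.
Qed.

Lemma Cc_Aplus t1 t2 t3 :
  geq (Cc (Star (Circ t1 t2) t3)) (Cc (Star t1 (Star t2 t3)) ++ g KA [false]).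
Proof.
  cbn [Cc]. gword_norm.
  do 2 f_equiv.
  rewrite <- (geq_in_context (sh11_A (Cc t3))). f_equiv.
  rewrite A_S. f_equiv.
  rewrite (geq_in_context (ginv_sh11_comm_S (Cc t2))). f_equiv.
  rewrite <- (geq_in_context (g0_comm_g1 KA)), cancel_ginv_r.
  rewrite <- !sh_ginv, <- (geq_in_context (sh1_comm_g0 KA [] _)). f_equiv.
  symmetry. apply sh1_comm_g0.
Qed.

Definition plus_root (k : kind) : term -> option term :=
  match k with KS => Splus_root | KA => Aplus_root end.

Lemma Cc_plus_root k t t' : plus_root k t = Some t' -> geq (Cc t') (Cc t ++ g k [false]).
Proof.
  destruct k, t as [|t1 [|t2 t3|t2 t3]|]; cbn; try discriminate; intros [= <-].
  - apply Cc_Splus_Star.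
  - apply Cc_Splus_Circ.
  - apply Cc_Aplus.
Qed.

Lemma Cc_Star_l k d t1 t1' t2 :
  geq (Cc t1') (Cc t1 ++ g k (false :: d)) ->
  geq (Cc (Star t1' t2)) (Cc (Star t1 t2) ++ g k (false :: false :: d)).
Proof.
  intro H. cbn [Cc]. rewrite H. gword_norm. f_equiv.
  rewrite <- (geq_in_context (sh1_comm_g0 k d _)). f_equiv.
  rewrite g0_S. f_equiv. rewrite cancel_ginv_r.
  rewrite <- sh_ginv. symmetry. apply sh1_comm_g0.
Qed.

Lemma Cc_Star_r k d t1 t2 t2' :
  geq (Cc t2') (Cc t2 ++ g k (false :: d)) ->
  geq (Cc (Star t1 t2')) (Cc (Star t1 t2) ++ g k (false :: true :: d)).
Proof.
  intro H. cbn [Cc]. rewrite H. gword_norm. do 2 f_equiv.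
  rewrite (geq_in_context (g10_S k d)). f_equiv.
  rewrite <- sh_ginv. symmetry. apply sh1_comm_g0.
Qed.

Lemma Cc_Circ_l k d t1 t1' t2 :
  geq (Cc t1') (Cc t1 ++ g k (false :: d)) ->
  geq (Cc (Circ t1' t2)) (Cc (Circ t1 t2) ++ g k (false :: false :: d)).
Proof.
  intro H. cbn [Cc]. rewrite H. gword_norm. f_equiv.
  rewrite <- (geq_in_context (sh1_comm_g0 k d _)). f_equiv.
  apply g0_A.
Qed.

Lemma Cc_Circ_r k d t1 t2 t2' :
  geq (Cc t2') (Cc t2 ++ g k (false :: d)) ->
  geq (Cc (Circ t1 t2')) (Cc (Circ t1 t2) ++ g k (false :: true :: d)).
Proof. intro H. cbn [Cc]. rewrite H. gword_norm. do 2 f_equiv. apply g10_A. Qed.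

Lemma Cc_at_addr_plus_root k a t t' :
  at_addr (plus_root k) a t = Some t' -> geq (Cc t') (Cc t ++ g k (false :: a)).
Proof.
  revert t t'; induction a as [|b a IH]; intros t t' H; [exact (Cc_plus_root k t t' H)|].
  destruct t as [|t1 t2|t1 t2]; [discriminate| |]; destruct b; cbn in H;
    match type of H with option_map _ ?o = Some _ => destruct o as [u|] eqn:E end;
    try discriminate; injection H as <-;
    first [apply Cc_Star_r | apply Cc_Star_l | apply Cc_Circ_r | apply Cc_Circ_l];
    exact (IH _ _ E).
Qed.

Lemma at_addr_inverse (f f' : term -> option term) :
  (forall t t', f t = Some t' -> f' t' = Some t) ->
  forall a t t', at_addr f a t = Some t' -> at_addr f' a t' = Some t.
Proof.
  intros Hf a; induction a as [|b a IH]; intros t t' H; cbn in *; [auto|].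
  destruct t as [|t1 t2|t1 t2]; [discriminate| |]; destruct b;
    match type of H with option_map _ ?o = Some _ => destruct o as [u|] eqn:E end;
    try discriminate; injection H as <-; cbn; rewrite (IH _ _ E); reflexivity.
Qed.

Lemma Sminus_root_inverse t t' : Sminus_root t = Some t' -> Splus_root t' = Some t.
Proof.
  destruct t as [|[|t1 t2|] [|t3 t4|t3 t4]|[|t1 t2|] [|t3 t4|t3 t4]]; cbn; try discriminate;
    destruct (term_eq_dec t1 t3); try discriminate; intros [= <-]; subst; reflexivity.
Qed.

Lemma Aminus_root_inverse t t' : Aminus_root t = Some t' -> Aplus_root t' = Some t.
Proof. destruct t as [|[|t1 t2|t1 t2] t3|]; cbn; try discriminate. intros [= <-]. reflexivity. Qed.

Lemma Cc_eval_letter l t t' :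
  eval_letter l t = Some t' -> geq (Cc t') (Cc t ++ sh [false] [evalG_letter l]).
Proof.
  intro H; destruct l as [[|] a|[|] a].
  - exact (Cc_at_addr_plus_root KS a t t' H).
  - apply (geq_move_r _ _ (g KS (false :: a))).
    exact (Cc_at_addr_plus_root KS a t' t (at_addr_inverse _ _ Sminus_root_inverse a t t' H)).
  - exact (Cc_at_addr_plus_root KA a t t' H).
  - apply (geq_move_r _ _ (g KA (false :: a))).
    exact (Cc_at_addr_plus_root KA a t' t (at_addr_inverse _ _ Aminus_root_inverse a t t' H)).
Qed.

Theorem lemma3p8 : forall (t : term) (w : word) (t' : term),
  eval w t = Some t' ->
  geq (Cc t') (Cc t ++ sh [false] (evalG w)).
Proof.
  intros t w; revert t; induction w as [|l w IH]; intros t t' H; cbn [eval] in H.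
  - injection H as <-. cbn. rewrite app_nil_r. reflexivity.
  - destruct (eval_letter l t) as [t1|] eqn:E; [|discriminate].
    rewrite (IH _ _ H), (Cc_eval_letter _ _ _ E), <- app_assoc. reflexivity.
Qed.
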